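(* Let $p$ be $(12,\emptyset,\{0,1\})$ or $(12,\emptyset,\{0,2\})$, or any pattern in the same symmetry class as one of these. Then for all $n\ge2$, $a_n(p)=n!/2$.
   Context: For $n\ge1$, $\mathcal S_n$ is the set of permutations $\pi=\pi_1\cdots\pi_n$ of $[n]$. A bi-vincular pattern of length $k$ is a triple $p=(\sigma,X,Y)$ with $\sigma\in\mathcal S_k$ and $X,Y\subseteq\{0,1,\dots,k\}$. A permutation $\pi\in\mathcal S_n$ contains $p$ if there are indices $1\le i_1<\dots<i_k\le n$ such that $(\pi_{i_1},\dots,\pi_{i_k})$ is order-isomorphic to $\sigma$ and, letting $j_1<\dots<j_k$ be the values $\pi_{i_1},\dots,\pi_{i_k}$ sorted increasingly and setting $i_0=j_0=0$, $i_{k+1}=j_{k+1}=n+1$, one has $i_{x+1}=i_x+1$ for all $x\in X$ and $j_{y+1}=j_y+1$ for all $y\in Y$. Otherwise $\pi$ avoids $p$; $a_n(p)$ is the number of $\pi\in\mathcal S_n$ avoiding $p$. Symmetries: $p^{i}=(\sigma^{-1},Y,X)$, $p^{r}=(\sigma^{r},\{k-x:x\in X\},Y)$, $p^{c}=(\sigma^{c},X,\{k-y:y\in Y\})$ with $\sigma^r_j=\sigma_{k+1-j}$, $\sigma^c_j=k+1-\sigma_j$; the symmetry class of $p$ consists of all patterns obtained from $p$ by finitely many applications of these maps. *)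

From HB Require Import structures.
From mathcomp Require Import all_boot all_fingroup.
Set Implicit Arguments. Unset Strict Implicit. Unset Printing Implicit Defensive.

(* Bi-vincular pattern (sigma, X, Y) of length k: sigma : 'S_k acts on
   {0,..,k-1} (value v stands for v+1), and X, Y are subsets of {0,..,k}. *)
Record bvpat := BVPat {
  bk : nat;
  bsig : 'S_bk;
  bX : {set 'I_bk.+1};
  bY : {set 'I_bk.+1} }.

(* 1-based positions i_0 = 0, i_1 < ... < i_k, i_{k+1} = n+1 of an occurrence
   idx : 'I_k -> 'I_n (0-based positions), and 1-based sorted values
   j_0 = 0, j_1 < ... < j_k, j_{k+1} = n+1. *)
Definition occ_pos (n k : nat) (idx : {ffun 'I_k -> 'I_n}) (x : nat) : nat :=
  nth n.+1 (0 :: [seq (idx a).+1 | a <- enum 'I_k]) x.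

Definition occ_val (n k : nat) (pi : 'S_n) (idx : {ffun 'I_k -> 'I_n}) (y : nat) : nat :=
  nth n.+1 (0 :: sort leq [seq (pi (idx a)).+1 | a <- enum 'I_k]) y.

Definition is_occurrence (n : nat) (pi : 'S_n) (p : bvpat) (idx : {ffun 'I_(bk p) -> 'I_n}) : bool :=
  [&& [forall a : 'I_(bk p), forall b : 'I_(bk p), (a < b) ==> (idx a < idx b)],
      [forall a : 'I_(bk p), forall b : 'I_(bk p),
          (pi (idx a) < pi (idx b)) == (bsig p a < bsig p b)],
      [forall x in bX p, @occ_pos n (bk p) idx x.+1 == (@occ_pos n (bk p) idx x).+1] &
      [forall y in bY p, @occ_val n (bk p) pi idx y.+1 == (@occ_val n (bk p) pi idx y).+1]].

Definition contains (n : nat) (pi : 'S_n) (p : bvpat) : bool :=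
  [exists idx : {ffun 'I_(bk p) -> 'I_n}, @is_occurrence n pi p idx].

Definition avoid_count (p : bvpat) (n : nat) : nat :=
  #|[set pi : 'S_n | ~~ contains pi p]|.

Definition revp (k : nat) : 'S_k := perm (@rev_ord_inj k).

Definition pat_i (p : bvpat) : bvpat := BVPat ((bsig p)^-1)%g (bY p) (bX p).
(* p^r = (sigma^r, {k-x : x in X}, Y), sigma^r_j = sigma_{k+1-j} *)
Definition pat_r (p : bvpat) : bvpat :=
  BVPat (revp (bk p) * bsig p)%g [set rev_ord x | x in bX p] (bY p).
(* p^c = (sigma^c, X, {k-y : y in Y}), sigma^c_j = k+1-sigma_j *)
Definition pat_c (p : bvpat) : bvpat :=
  BVPat (bsig p * revp (bk p))%g (bX p) [set rev_ord y | y in bY p].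

Inductive sym_class (p : bvpat) : bvpat -> Prop :=
  | sym_refl : sym_class p p
  | sym_i q : sym_class p q -> sym_class p (pat_i q)
  | sym_r q : sym_class p q -> sym_class p (pat_r q)
  | sym_c q : sym_class p q -> sym_class p (pat_c q).

Definition pat12_01 : bvpat :=
  @BVPat 2 1%g set0 [set (inord 0 : 'I_3); inord 1].
Definition pat12_02 : bvpat :=
  @BVPat 2 1%g set0 [set (inord 0 : 'I_3); inord 2].

From mathcomp Require Import all_boot all_fingroup zify.

Set Implicit Arguments.
Unset Strict Implicit.
Unset Printing Implicit Defensive.

(* Every pattern in the two symmetry classes has length 2, one of X, Y empty
   and the other a 2-element subset of {0,1,2}.  Two of the three adjacency
   conditions on the boundaries 0 < a+1 < b+1 < n+1 force (a, b) to be one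
   fixed pair c < d: (0,1) for {0,1}, (0,n-1) for {0,2}, (n-2,n-1) for {1,2}.
   Hence pi contains p iff the entries at positions c, d (or the positions of
   the values c, d) are in the order prescribed by sigma; composing pi with the
   transposition (c d) exchanges containment and avoidance, so exactly half of
   the n! permutations avoid p. *)

Lemma card_half (T : finType) (F : pred T) (g : T -> T) :
  injective g -> (forall x, F (g x) = ~~ F x) -> #|[set x | F x]| = #|T| %/ 2.
Proof.
move=> g_inj gF; set A := [set x | F x].
have le_compl (B : {set T}) : {in B, forall x, g x \notin B} -> #|B| <= #|~: B|.
  move=> gB; rewrite -(card_imset _ g_inj) subset_leq_card //.
  by apply/subsetP => _ /imsetP[x Bx ->]; rewrite inE gB.
have leA : #|A| <= #|~: A| by apply: le_compl => x; rewrite !inE gF => ->.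
have leCA : #|~: A| <= #|A|.
  by rewrite -{2}[A]setCK; apply: le_compl => x; rewrite !inE gF negbK => ->.
have -> : #|T| = #|A| * 2 by rewrite -(cardsC A); lia.
by rewrite mulnK.
Qed.

Lemma card_perm_order n (c d : 'I_n) (b : bool) :
  c != d -> #|[set pi : 'S_n | (pi c < pi d) != b]| = n`! %/ 2.
Proof.
move=> ne_cd; rewrite -card_Sn; apply: (@card_half _ _ (fun pi => tperm c d * pi)%g).
  exact: mulgI.
move=> pi; rewrite !permM tpermL tpermR.
have : pi c != pi d :> nat by rewrite (inj_eq val_inj) (inj_eq perm_inj).
by move=> ne; case: ltngtP ne => // _ _; case: b.
Qed.

Lemma card_perm_inv_order n (c d : 'I_n) (b : bool) :
  c != d -> #|[set pi : 'S_n | (pi^-1 c < pi^-1 d)%g != b]| = n`! %/ 2.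
Proof.
move=> ne_cd; rewrite -(@card_perm_order _ _ _ b ne_cd) -(card_preimset _ (@invg_inj _)).
by apply: eq_card => pi; rewrite !inE invgK.
Qed.

Lemma ord2P (i : 'I_2) : i = ord0 \/ i = ord_max.
Proof. by case: i => [[|[|//]]] ?; [left | right]; apply: val_inj. Qed.

Lemma map_enum_ord2 (T : Type) (f : 'I_2 -> T) :
  [seq f i | i <- enum 'I_2] = [:: f ord0; f ord_max].
Proof. by rewrite !enum_ordSl enum_ord0 /=; congr [:: _; f _]; apply: val_inj. Qed.

Lemma sort_leq_pair (a b : nat) : sort leq [:: a; b] = [:: minn a b; maxn a b].
Proof. by rewrite /sort /=; case: leqP => ab; rewrite ?merge0s ?mergeS0. Qed.

(* The boundaries [0; a+1; b+1; n+1] of [is_occurrence]; the last one is the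
   default value of [nth]. *)
Definition adjacent_on (n a b : nat) (Z : {set 'I_3}) : bool :=
  [forall z in Z, nth n.+1 [:: 0; a.+1; b.+1] z.+1 == (nth n.+1 [:: 0; a.+1; b.+1] z).+1].

Lemma adjacent_on0 n a b : adjacent_on n a b set0.
Proof. by apply/forall_inP => z; rewrite inE. Qed.

Lemma adjacent_onE n a b (Z : {set 'I_3}) :
  adjacent_on n a b Z =
  [&& (inord 0 \in Z) ==> (a == 0), (inord 1 \in Z) ==> (b == a.+1)
    & (inord 2 \in Z) ==> (b.+1 == n)].
Proof.
apply/forall_inP/and3P => [adj | [adj0 adj1 adj2] z].
  by split; apply/implyP => /adj; rewrite inordK //=; lia.
rewrite -(inord_val z); case: z => [[|[|[|//]]] ?] /= zZ; rewrite inordK //=.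
- exact: (implyP adj0 zZ).
- exact: (implyP adj1 zZ).
- by rewrite eqSS eq_sym (implyP adj2 zZ).
Qed.

Lemma contains_len2 n (pi : 'S_n) (s : 'S_2) X Y :
  contains pi (BVPat s X Y) =
  [exists u : 'I_n, exists v : 'I_n,
     [&& u < v, (pi u < pi v) == (s ord0 < s ord_max), adjacent_on n u v X &
         adjacent_on n (minn (pi u) (pi v)) (maxn (pi u) (pi v)) Y]].
Proof.
rewrite /contains /is_occurrence /occ_pos /occ_val /adjacent_on /=.
apply/existsP/existsP => [[idx] | [u /existsP[v]]].
  rewrite !map_enum_ord2 sort_leq_pair minnSS maxnSS => /and4P[inc ord adjX adjY].
  exists (idx ord0); apply/existsP; exists (idx ord_max).
  by rewrite (implyP (forallP (forallP inc _) _)) // (forallP (forallP ord _) _) adjX adjY.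
move=> /and4P[uv ord adjX adjY]; exists [ffun i => if i == ord0 then u else v].
rewrite !map_enum_ord2 sort_leq_pair minnSS maxnSS !ffunE /= adjX adjY !andbT.
have s01 : s ord0 != s ord_max by rewrite (inj_eq perm_inj).
have piuv : pi u != pi v :> nat by rewrite (inj_eq val_inj) (inj_eq perm_inj) neq_ltn uv.
apply/andP; split; apply/forallP => i; apply/forallP => j; rewrite !ffunE.
  by case: (ord2P i) => ->; case: (ord2P j) => ->.
case: (ord2P i) => ->; case: (ord2P j) => -> //=; rewrite ?ltnn //.
move: ord s01 piuv; rewrite -!(inj_eq val_inj) /=.
by case: (ltngtP (pi u) (pi v)); case: (ltngtP (s ord0) (s ord_max)).
Qed.

Definition pins (n : nat) (Z : {set 'I_3}) (c d : nat) :=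
  forall a b, a < b -> adjacent_on n a b Z = (a == c) && (b == d).

Lemma pins_card2 n (Z : {set 'I_3}) :
  1 < n -> #|Z| = 2 -> exists c d : 'I_n, c < d /\ pins n Z c d.
Proof.
move=> n_gt1 cardZ.
have [k ->] : exists k, Z = [set~ k].
  have /cards1P[k CZ] : #|~: Z| == 1.
    by apply/eqP/(@addnI #|Z|); rewrite cardsC card_ord cardZ.
  by exists k; rewrite -CZ setCK.
have lt_n m : n - m.+1 < n by lia.
case: k => [[|[|[|//]]] ?].
- exists (Ordinal (lt_n 1)), (Ordinal (lt_n 0)); split=> [/= | a b ab]; first lia.
  by rewrite adjacent_onE !in_setC1 -!(inj_eq val_inj) /= !inordK //=; lia.
- exists (Ordinal (lt_n n.-1)), (Ordinal (lt_n 0)); split=> [/= | a b ab]; first lia.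
  by rewrite adjacent_onE !in_setC1 -!(inj_eq val_inj) /= !inordK //=; lia.
- exists (Ordinal (lt_n n.-1)), (Ordinal (lt_n n.-2)); split=> [/= | a b ab]; first lia.
  by rewrite adjacent_onE !in_setC1 -!(inj_eq val_inj) /= !inordK //=; lia.
Qed.

Section PinnedPair.

Variables (n : nat) (c d : 'I_n) (s : 'S_2).
Hypothesis lt_cd : c < d.

Lemma contains_pinned_positions (pi : 'S_n) X :
  pins n X c d -> contains pi (BVPat s X set0) = ((pi c < pi d) == (s ord0 < s ord_max)).
Proof.
move=> pinX; rewrite contains_len2; apply/existsP/idP => [[u /existsP[v]] | ord].
  case/and4P => uv ord; rewrite pinX // => /andP[/eqP/val_inj uc /eqP/val_inj vd] _.
  by rewrite -uc -vd.
by exists c; apply/existsP; exists d; rewrite lt_cd ord pinX // !eqxx adjacent_on0.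
Qed.

Lemma contains_pinned_values (pi : 'S_n) Y :
  pins n Y c d ->
  contains pi (BVPat s set0 Y) = ((pi^-1 c < pi^-1 d)%g == (s ord0 < s ord_max)).
Proof.
move=> pinY; rewrite contains_len2; apply/existsP/idP => [[u /existsP[v]] | ord].
  case/and4P => uv + _; case: (ltngtP (pi u) (pi v)) => [lt | gt | /val_inj/perm_inj eq].
  - rewrite pinY // => ord /andP[/eqP/val_inj <- /eqP/val_inj <-].
    by rewrite !permK uv.
  - rewrite pinY // => ord /andP[/eqP/val_inj <- /eqP/val_inj <-].
    by rewrite !permK ltnNge (ltnW uv).
  - by rewrite eq ltnn in uv.
have ne_cd : (pi^-1 c)%g != (pi^-1 d)%g by rewrite (inj_eq perm_inj) neq_ltn lt_cd.
case: (ltngtP (pi^-1 c)%g (pi^-1 d)%g) ord => [lt | gt | /val_inj eq].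
- move=> ord; exists (pi^-1 c)%g; apply/existsP; exists (pi^-1 d)%g.
  rewrite !permKV lt lt_cd ord (minn_idPl (ltnW lt_cd)) (maxn_idPr (ltnW lt_cd)) pinY //.
  by rewrite !eqxx adjacent_on0.
- move=> ord; exists (pi^-1 d)%g; apply/existsP; exists (pi^-1 c)%g.
  rewrite !permKV gt ltnNge (ltnW lt_cd) ord (minn_idPr (ltnW lt_cd)) (maxn_idPl (ltnW lt_cd)).
  by rewrite pinY // !eqxx adjacent_on0.
- by rewrite eq eqxx in ne_cd.
Qed.

Lemma avoid_count_pinned (Z : {set 'I_3}) :
  pins n Z c d ->
  avoid_count (BVPat s Z set0) n = n`! %/ 2 /\ avoid_count (BVPat s set0 Z) n = n`! %/ 2.
Proof.
move=> pinZ; have ne_cd : c != d := negbT (ltn_eqF lt_cd).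
split; rewrite /avoid_count.
  rewrite -(card_perm_order (s ord0 < s ord_max) ne_cd).
  by apply: eq_card => pi; rewrite !inE (contains_pinned_positions pi pinZ).
rewrite -(card_perm_inv_order (s ord0 < s ord_max) ne_cd).
by apply: eq_card => pi; rewrite !inE (contains_pinned_values pi pinZ).
Qed.

End PinnedPair.

Definition two_adjacency_pattern (p : bvpat) : Prop :=
  exists (s : 'S_2) (Z : {set 'I_3}), #|Z| = 2 /\ (p = BVPat s Z set0 \/ p = BVPat s set0 Z).

Lemma avoid_count_two_adjacency p n :
  two_adjacency_pattern p -> 1 < n -> avoid_count p n = n`! %/ 2.
Proof.
move=> [s [Z [cardZ eq_p]]] n_gt1; have [c [d [lt_cd pinZ]]] := pins_card2 n_gt1 cardZ.
by have [countX countY] := avoid_count_pinned s lt_cd pinZ; case: eq_p => ->.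
Qed.

Lemma sym_class_two_adjacency p q :
  two_adjacency_pattern p -> sym_class p q -> two_adjacency_pattern q.
Proof.
have card_rev (Z : {set 'I_3}) : #|[set rev_ord z | z in Z]| = #|Z|.
  by apply: card_imset; exact: rev_ord_inj.
move=> p_two; elim=> // {}q _ [s [Z [cardZ [|] ->]]].
- by exists s^-1%g, Z; split=> //; right.
- by exists s^-1%g, Z; split=> //; left.
- by exists (revp 2 * s)%g, [set rev_ord z | z in Z]; rewrite card_rev; split=> //; left.
- by exists (revp 2 * s)%g, Z; split=> //; right; rewrite /pat_r /= imset0.
- by exists (s * revp 2)%g, Z; split=> //; left; rewrite /pat_c /= imset0.
- by exists (s * revp 2)%g, [set rev_ord z | z in Z]; rewrite card_rev; split=> //; right.
Qed.

Lemma two_adjacency_pattern_base (y : nat) :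
  0 < y < 3 -> two_adjacency_pattern (@BVPat 2 1%g set0 [set inord 0; inord y]).
Proof.
move=> y_range; exists 1%g, [set inord 0; inord y]; split; last by right.
by case/andP: y_range => y_gt0 y_lt3; rewrite cards2 -(inj_eq val_inj) /= !inordK // eq_sym -lt0n y_gt0.
Qed.

Theorem mainTheorem3 (p : bvpat) :
  sym_class pat12_01 p \/ sym_class pat12_02 p ->
  forall n : nat, 2 <= n -> avoid_count p n = n`! %/ 2.
Proof.
move=> from_base n n_ge2; apply: avoid_count_two_adjacency n_ge2.
by case: from_base; apply: sym_class_two_adjacency; apply: two_adjacency_pattern_base.
Qed.
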